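(* Fix $m>1$. For $b\in[0,1/\sqrt{24}]$ set $c=c(b)=\sqrt{1+b^2}$, $d=d(b)=\big(2(2b-c)\big)^{-1}$ and $$I(b)=\int_{-1}^{1}\frac{(2+s)-2(bs+c)^2}{(bs+c)^{m+4}}\,(dbs+dc+1)^{m-2}\,(2+s)\,ds .$$ Then $I(0)=\left(\tfrac12\right)^{m-2}\cdot\tfrac23>0$, $I(1/\sqrt{24})<0$, and there exists $b\in(0,1/\sqrt{24})$ with $I(b)=0$.
   Context: For $b\in[0,1/\sqrt{24}]$ one has $d<0$, $bs+c>0$ and $dbs+dc+1\ge 0$ for $s\in[-1,1]$ (with equality only at $b=1/\sqrt{24}$, $s=1$), so the integrand is well defined and integrable. (In the paper, a zero of $I$ yields a smooth $U(2)$-invariant conformally Kähler quasi-Einstein metric on $\mathbb{C}P^2\sharp\overline{\mathbb{C}P}^2$ with parameter $m$.) *)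

From Stdlib Require Import Reals Lra.
Open Scope R_scope.

Definition cb (b : R) : R := sqrt (1 + b ^ 2).
Definition db (b : R) : R := / (2 * (2 * b - cb b)).

(* Integrand of I(b) with real parameter m; real powers via Rpower
   (bases are positive on the relevant range s in [-1,1)). *)
Definition integrand (m b s : R) : R :=
  ((2 + s) - 2 * (b * s + cb b) ^ 2) / Rpower (b * s + cb b) (m + 4)
  * Rpower (db b * b * s + db b * cb b + 1) (m - 2) * (2 + s).

(* (Possibly improper at the right endpoint) Riemann integral:
   f is Riemann integrable on [a,t] for every t in [a,u), and
   int_a^t f -> L as t -> u^-.  For integrands continuous on [a,u]
   this coincides with the ordinary integral. *)
Definition improper_int_eq (f : R -> R) (a u L : R) : Prop :=
  (forall t, a <= t < u -> exists _ : Riemann_integrable f a t, True) /\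
  (forall eps, 0 < eps -> exists delta, 0 < delta /\
     forall t (pr : Riemann_integrable f a t),
       a <= t < u -> u - delta < t -> Rabs (RiemannInt pr - L) < eps).

Definition I_eq (m b L : R) : Prop :=
  improper_int_eq (integrand m b) (-1) 1 L.

From Stdlib Require Import Reals Lra Psatz.
From Coquelicot Require Import Coquelicot.
Open Scope R_scope.

(* I(b) is the integral over s in [-1, 1] of a function that is jointly
   continuous in (s, b) on [-1, 1] x [0, 1/sqrt 24], so I is continuous and the
   intermediate value theorem applies between I(0) > 0 (at b = 0 the integrand
   is (1/2)^(m-2) s (2 + s)) and I(1/sqrt 24) < 0 (there the integrand is
   negative).  The only delicate point is the corner b = 1/sqrt 24, s = 1, where
   the base D = d b s + d c + 1 of the power m - 2 vanishes.  With
   P = c - 4b - b s = 2 (c - 2b) D, the identity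
     b N = (c - 2b)(c - 3b)(c - 5b) + P (8bc - 16b^2 - 1) - 2b P^2
   for the numerator N = (2 + s) - 2 (b s + c)^2, and c - 5b <= P, show that
   N = O(D) there, so the integrand is O(D^(m-1)), which tends to 0 as m > 1.
   To integrate over a fixed rectangle, the integrand is extended to R x R by
   clamping both variables. *)

Definition bmax : R := / sqrt 24.

Lemma bmax_sqr : bmax ^ 2 = / 24.
Proof. unfold bmax. rewrite pow_inv, <- Rsqr_pow2, Rsqr_sqrt; lra. Qed.

Lemma bmax_bounds : 1/5 < bmax < 21/100.
Proof.
  assert (Hpos : 0 < bmax) by (apply Rinv_0_lt_compat, sqrt_lt_R0; lra).
  pose proof bmax_sqr. nra.
Qed.

Lemma cb_sqr b : cb b ^ 2 = 1 + b ^ 2.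
Proof. unfold cb. rewrite <- Rsqr_pow2, Rsqr_sqrt; [reflexivity | nra]. Qed.

Lemma cb_ge_1 b : 1 <= cb b.
Proof. unfold cb. rewrite <- sqrt_1 at 1. apply sqrt_le_1_alt. nra. Qed.

Lemma cb_bmax : cb bmax = 5 * bmax.
Proof.
  pose proof bmax_sqr. pose proof bmax_bounds.
  unfold cb. replace (1 + bmax ^ 2) with ((5 * bmax) ^ 2) by nra.
  apply sqrt_pow2. lra.
Qed.

Lemma cb_sub_5b_ge0 b : 0 <= b <= bmax -> 0 <= cb b - 5 * b.
Proof.
  intros Hb. pose proof (cb_sqr b). pose proof (cb_ge_1 b).
  pose proof bmax_sqr. pose proof bmax_bounds. nra.
Qed.

Lemma cb_sub_2b_gt0 b : 0 <= b <= bmax -> 0 < cb b - 2 * b.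
Proof. intros. pose proof (cb_ge_1 b). pose proof bmax_bounds. lra. Qed.

Lemma base_pos b s : 0 <= b <= bmax -> -1 <= s <= 1 -> 0 < b * s + cb b.
Proof. intros. pose proof (cb_ge_1 b). pose proof bmax_bounds. nra. Qed.

Definition dbase (b s : R) : R := db b * b * s + db b * cb b + 1.

Lemma dbase_mul b s : 0 <= b <= bmax ->
  2 * (cb b - 2 * b) * dbase b s = cb b - 4 * b - b * s.
Proof.
  intros Hb. pose proof (cb_sub_2b_gt0 b Hb). unfold dbase, db. field. lra.
Qed.

Lemma dbase_bmax_1 : dbase bmax 1 = 0.
Proof.
  pose proof bmax_bounds as Hb.
  pose proof (dbase_mul bmax 1 ltac:(lra)) as E.
  pose proof (cb_sub_2b_gt0 bmax ltac:(lra)).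
  rewrite cb_bmax in *. nra.
Qed.

Lemma dbase_nonpos_corner b s : 0 <= b <= bmax -> -1 <= s <= 1 ->
  dbase b s <= 0 -> b = bmax /\ s = 1.
Proof.
  intros Hb Hs HD. pose proof bmax_bounds. pose proof bmax_sqr.
  pose proof (dbase_mul b s Hb). pose proof (cb_sub_2b_gt0 b Hb).
  pose proof (cb_sub_5b_ge0 b Hb). pose proof (cb_sqr b).
  assert (HP : cb b - 4 * b - b * s <= 0) by nra.
  assert (Hc5 : cb b = 5 * b) by nra.
  assert (Hbmax : b = bmax) by nra.
  split; [exact Hbmax | nra].
Qed.

Lemma integrand_bmax_1 m : integrand m bmax 1 = 0.
Proof.
  pose proof bmax_sqr.
  assert (HN : (2 + 1) - 2 * (bmax * 1 + cb bmax) ^ 2 = 0).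
  { rewrite cb_bmax. replace (2 * (bmax * 1 + 5 * bmax) ^ 2) with (72 * bmax ^ 2) by ring.
    lra. }
  unfold integrand. rewrite HN. unfold Rdiv. ring.
Qed.

Lemma integrand_eq0_of_dbase_nonpos m b s : 0 <= b <= bmax -> -1 <= s <= 1 ->
  dbase b s <= 0 -> integrand m b s = 0.
Proof.
  intros Hb Hs HD. destruct (dbase_nonpos_corner b s Hb Hs HD) as [-> ->].
  apply integrand_bmax_1.
Qed.

Lemma numer_identity b s : b * ((2 + s) - 2 * (b * s + cb b) ^ 2) =
  (cb b - 2 * b) * (cb b - 3 * b) * (cb b - 5 * b)
  + (cb b - 4 * b - b * s) * (8 * b * cb b - 16 * b ^ 2 - 1)
  - 2 * b * (cb b - 4 * b - b * s) ^ 2.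
Proof.
  pose proof (cb_sqr b) as Hc. set (c := cb b) in *.
  assert (Hb : b * (c ^ 2 - (1 + b ^ 2)) = 0) by (rewrite Hc; ring).
  assert (Hc' : c * (c ^ 2 - (1 + b ^ 2)) = 0) by (rewrite Hc; ring).
  lra.
Qed.

Lemma numer_bound b s : 3/20 <= b <= bmax -> 0 <= s <= 1 ->
  Rabs ((2 + s) - 2 * (b * s + cb b) ^ 2) <= 20 * (cb b - 4 * b - b * s).
Proof.
  intros Hb Hs. pose proof bmax_bounds. pose proof bmax_sqr.
  pose proof (cb_sub_5b_ge0 b ltac:(lra)) as H5.
  pose proof (numer_identity b s) as HI.
  pose proof (cb_sqr b). pose proof (cb_ge_1 b).
  set (c := cb b) in *. set (N := (2 + s) - 2 * (b * s + c) ^ 2) in *.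
  set (P := c - 4 * b - b * s) in *.
  assert (Hc : c <= 103/100) by nra.
  assert (HP : c - 5 * b <= P <= 1/2) by (unfold P; nra).
  set (X := (c - 2 * b) * (c - 3 * b)) in *.
  set (Y := 8 * b * c - 16 * b ^ 2 - 1) in *.
  assert (HX : 0 <= X <= 1) by (unfold X; nra).
  assert (HY : -1 <= Y <= 1) by (unfold Y; nra).
  assert (HbN : Rabs (b * N) <= 3 * P).
  { rewrite HI. apply Rabs_le. nra. }
  rewrite Rabs_mult, (Rabs_pos_eq b) in HbN by lra.
  pose proof (Rabs_pos N). nra.
Qed.

Lemma Rpower_pos x y : 0 < Rpower x y.
Proof. apply exp_pos. Qed.

Lemma integrand_bound_near_corner m b s : 0 <= m + 4 ->
  3/20 <= b <= bmax -> 0 <= s <= 1 -> 0 < dbase b s ->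
  Rabs (integrand m b s) <= 180 * Rpower (dbase b s) (m - 1).
Proof.
  intros Hm Hb Hs HD. pose proof bmax_bounds. pose proof bmax_sqr.
  pose proof (numer_bound b s Hb Hs) as HN.
  pose proof (dbase_mul b s ltac:(lra)) as HP.
  pose proof (cb_sqr b). pose proof (cb_ge_1 b).
  assert (HU : 1 <= Rpower (b * s + cb b) (m + 4)).
  { rewrite <- (Rpower_O (b * s + cb b)) by nra. apply Rle_Rpower; nra. }
  replace (m - 1) with ((m - 2) + 1) by ring.
  rewrite Rpower_plus, Rpower_1 by exact HD.
  unfold integrand. fold (dbase b s).
  set (D := dbase b s) in *. set (R2 := Rpower D (m - 2)).
  set (U := Rpower (b * s + cb b) (m + 4)) in *.
  set (N := 2 + s - 2 * (b * s + cb b) ^ 2) in *.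
  assert (HND : Rabs N <= 60 * D) by nra.
  assert (HNU : Rabs (N / U) <= 60 * D).
  { unfold Rdiv. rewrite Rabs_mult, Rabs_inv, (Rabs_pos_eq U) by lra.
    assert (HUinv : / U <= 1) by (rewrite <- Rinv_1; apply Rinv_le_contravar; lra).
    assert (0 < / U) by (apply Rinv_0_lt_compat; lra).
    pose proof (Rabs_pos N). nra. }
  assert (HR2 : 0 < R2) by apply Rpower_pos.
  rewrite !Rabs_mult, (Rabs_pos_eq R2), (Rabs_pos_eq (2 + s)) by lra.
  pose proof (Rabs_pos (N / U)).
  apply Rle_trans with (60 * D * R2 * 3); [|lra].
  apply Rmult_le_compat; nra.
Qed.

Lemma Rpower_small a K eps : 0 < a -> 0 < K -> 0 < eps ->
  exists eta, 0 < eta /\ forall x, 0 < x < eta -> K * Rpower x a < eps.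
Proof.
  intros Ha HK He. set (eta := Rpower (eps / K) (/ a)).
  assert (Heta : Rpower eta a = eps / K).
  { unfold eta. rewrite Rpower_mult, Rinv_l, Rpower_1 by (try apply Rdiv_lt_0_compat; lra).
    reflexivity. }
  exists eta. split; [apply Rpower_pos|]. intros x Hx.
  replace eps with (K * (eps / K)) by (field; lra).
  apply Rmult_lt_compat_l; [exact HK|]. rewrite <- Heta. apply Rlt_Rpower_l; lra.
Qed.

Definition clamp (a b x : R) : R := Rmax a (Rmin b x).

Lemma clamp_id a b x : a <= x <= b -> clamp a b x = x.
Proof. intros. unfold clamp, Rmax, Rmin. repeat destruct Rle_dec; lra. Qed.

Lemma clamp_range a b x : a <= b -> a <= clamp a b x <= b.
Proof. intros. unfold clamp, Rmax, Rmin. repeat destruct Rle_dec; lra. Qed.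

Lemma clamp_lipschitz a b x y : Rabs (clamp a b x - clamp a b y) <= Rabs (x - y).
Proof.
  unfold clamp, Rmax, Rmin, Rabs. repeat destruct Rle_dec; repeat destruct Rcase_abs; lra.
Qed.

Lemma continuity_clamp a b x : continuity_pt (clamp a b) x.
Proof.
  intros eps He. exists eps. split; [exact He|]. intros y [_ Hy]. simpl in *.
  unfold R_dist in *. eapply Rle_lt_trans; [apply clamp_lipschitz | exact Hy].
Qed.

Lemma continuity_cb x : continuity_pt cb x.
Proof.
  apply continuity_pt_filterlim, (ex_derive_continuous (V := R_NormedModule)).
  unfold cb. auto_derive. nra.
Qed.

Lemma continuity_db x : 0 <= x <= bmax -> continuity_pt db x.
Proof.
  intros Hx. pose proof (cb_sub_2b_gt0 x Hx).
  apply continuity_pt_filterlim, (ex_derive_continuous (V := R_NormedModule)).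
  unfold db, cb in *. auto_derive.
  replace (1 + x * (x * 1)) with (1 + x ^ 2) by ring. repeat split; nra.
Qed.

Lemma continuity_Rpower y x : 0 < x -> continuity_pt (fun x => Rpower x y) x.
Proof.
  intros Hx. apply derivable_continuous_pt.
  exact (exist _ _ (derivable_pt_lim_power x y Hx)).
Qed.

Lemma continuity_2d_pt_pow f n x y : continuity_2d_pt f x y ->
  continuity_2d_pt (fun u v => f u v ^ n) x y.
Proof.
  intros H. induction n as [|n IH]; simpl.
  - apply continuity_2d_pt_const.
  - apply (continuity_2d_pt_mult f (fun u v => f u v ^ n)); auto.
Qed.

Lemma continuity_2d_pt_div f g x y : continuity_2d_pt f x y -> continuity_2d_pt g x y ->
  g x y <> 0 -> continuity_2d_pt (fun u v => f u v / g u v) x y.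
Proof.
  intros. unfold Rdiv. apply (continuity_2d_pt_mult f (fun u v => / g u v)); auto.
  apply continuity_2d_pt_inv; auto.
Qed.

Ltac continuity_2d := repeat (cbv beta; match goal with
 | |- continuity_2d_pt (fun _ _ => ?c) _ _ => apply continuity_2d_pt_const
 | |- continuity_2d_pt (fun u _ => u) _ _ => apply continuity_2d_pt_id1
 | |- continuity_2d_pt (fun _ v => v) _ _ => apply continuity_2d_pt_id2
 | |- continuity_2d_pt (fun u v => @?A u v * @?B u v) _ _ =>
     apply (continuity_2d_pt_mult A B)
 | |- continuity_2d_pt (fun u v => @?A u v + @?B u v) _ _ =>
     apply (continuity_2d_pt_plus A B)
 | |- continuity_2d_pt (fun u v => @?A u v - @?B u v) _ _ =>
     apply (continuity_2d_pt_minus A B)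
 | |- continuity_2d_pt (fun u v => @?A u v / @?B u v) _ _ =>
     apply (continuity_2d_pt_div A B)
 | |- continuity_2d_pt (fun u v => @?A u v ^ ?n) _ _ => apply (continuity_2d_pt_pow A n)
 | |- continuity_2d_pt (fun u v => Rpower (@?A u v) ?y) _ _ =>
     apply (continuity_1d_2d_pt_comp (fun x => Rpower x y) A)
 | |- continuity_2d_pt (fun u v => ?f (@?A u v)) _ _ =>
     apply (continuity_1d_2d_pt_comp f A)
 end).

Definition integrand_ext (m s b : R) : R :=
  integrand m (clamp 0 bmax b) (clamp (-1) 1 s).

Definition dbase_ext (s b : R) : R := dbase (clamp 0 bmax b) (clamp (-1) 1 s).

Lemma integrand_ext_eq m s b : 0 <= b <= bmax -> -1 <= s <= 1 ->
  integrand_ext m s b = integrand m b s.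
Proof. intros. unfold integrand_ext. rewrite !clamp_id; auto; lra. Qed.

Lemma clamp_b_range b : 0 <= clamp 0 bmax b <= bmax.
Proof. apply clamp_range. pose proof bmax_bounds. lra. Qed.

Lemma clamp_s_range s : -1 <= clamp (-1) 1 s <= 1.
Proof. apply clamp_range. lra. Qed.

Lemma continuity_dbase_ext s b : continuity_2d_pt dbase_ext s b.
Proof.
  unfold dbase_ext, dbase. continuity_2d;
    solve [apply continuity_clamp | apply continuity_cb
          | apply continuity_db, clamp_b_range].
Qed.

Lemma continuity_integrand_ext_pos m s b : 0 < dbase_ext s b ->
  continuity_2d_pt (integrand_ext m) s b.
Proof.
  intros HD. unfold integrand_ext, integrand. continuity_2d;
    try solve [apply continuity_clamp | apply continuity_cb
              | apply continuity_db, clamp_b_range].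
  - apply continuity_Rpower, base_pos; [apply clamp_b_range | apply clamp_s_range].
  - apply Rgt_not_eq, Rpower_pos.
  - apply continuity_Rpower. exact HD.
Qed.

Lemma integrand_small_near_corner m : 1 < m -> forall eps, 0 < eps ->
  exists delta, 0 < delta /\ forall b s, 0 <= b <= bmax -> -1 <= s <= 1 ->
  Rabs (b - bmax) < delta -> Rabs (s - 1) < delta -> Rabs (integrand m b s) < eps.
Proof.
  intros hm eps He. pose proof bmax_bounds.
  destruct (Rpower_small (m - 1) 180 eps ltac:(lra) ltac:(lra) He) as (eta & Heta & Hsmall).
  destruct (continuity_dbase_ext 1 bmax (mkposreal eta Heta)) as (d & Hd).
  exists (Rmin d (1/20)). split; [apply Rmin_pos; [apply cond_pos | lra]|].
  intros b s Hb Hs Hbd Hsd.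
  pose proof (Rmin_l d (1/20)). pose proof (Rmin_r d (1/20)).
  specialize (Hd s b ltac:(lra) ltac:(lra)). simpl in Hd.
  unfold dbase_ext in Hd. rewrite !clamp_id, dbase_bmax_1, Rminus_0_r in Hd by lra.
  destruct (Rlt_le_dec 0 (dbase b s)) as [Hpos | Hneg].
  - apply Rabs_lt_between in Hd. apply Rabs_lt_between in Hbd. apply Rabs_lt_between in Hsd.
    eapply Rle_lt_trans; [apply integrand_bound_near_corner; lra|].
    apply Hsmall. lra.
  - rewrite integrand_eq0_of_dbase_nonpos, Rabs_R0 by lra. exact He.
Qed.

Lemma continuity_integrand_ext m s b : 1 < m -> continuity_2d_pt (integrand_ext m) s b.
Proof.
  intros hm.
  destruct (Rlt_le_dec 0 (dbase_ext s b)) as [Hpos | Hneg].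
  { apply continuity_integrand_ext_pos. exact Hpos. }
  destruct (dbase_nonpos_corner _ _ (clamp_b_range b) (clamp_s_range s) Hneg)
    as [Eb Es].
  intros eps. destruct (integrand_small_near_corner m hm eps (cond_pos eps)) as (d & Hd & Hk).
  exists (mkposreal d Hd). simpl. intros u v Hu Hv.
  unfold integrand_ext. rewrite Eb, Es, integrand_bmax_1, Rminus_0_r.
  pose proof (clamp_lipschitz 0 bmax v b). pose proof (clamp_lipschitz (-1) 1 u s).
  rewrite Eb in *. rewrite Es in *.
  apply Hk; [apply clamp_b_range | apply clamp_s_range | lra | lra].
Qed.

Lemma continuity_2d_pt_fst f x y : continuity_2d_pt f x y ->
  continuity_pt (fun u => f u y) x.
Proof.
  intros H eps He. destruct (H (mkposreal eps He)) as (d & Hd).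
  exists d. split; [apply cond_pos|]. intros u [_ Hu]. simpl in *. unfold R_dist in *.
  apply Hd; [exact Hu|]. rewrite Rminus_eq_0, Rabs_R0. apply cond_pos.
Qed.

Lemma ex_RInt_integrand_ext m b u v : 1 < m ->
  ex_RInt (fun s => integrand_ext m s b) u v.
Proof.
  intros hm. apply (ex_RInt_continuous (V := R_CompleteNormedModule)). intros s _.
  apply continuity_pt_filterlim, continuity_2d_pt_fst, continuity_integrand_ext, hm.
Qed.

Definition Ival (m b : R) : R := RInt (fun s => integrand_ext m s b) (-1) 1.

Lemma continuity_Ival m b : 1 < m -> continuity_pt (Ival m) b.
Proof.
  intros hm eps He.
  destruct (uniform_continuity_2d_1d (integrand_ext m) (-1) 1 b
    (fun s _ => continuity_integrand_ext m s b hm) (mkposreal (eps / 4) ltac:(lra)))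
    as (d & Hd).
  exists d. split; [apply cond_pos|]. intros v [_ Hv]. simpl in *. unfold R_dist in *.
  unfold Ival. rewrite <- (RInt_minus (V := R_CompleteNormedModule))
    by apply ex_RInt_integrand_ext, hm.
  eapply Rle_lt_trans; [apply abs_RInt_le_const with (M := eps / 4) | lra]; [lra| |].
  - apply (ex_RInt_minus (V := R_CompleteNormedModule)); apply ex_RInt_integrand_ext, hm.
  - intros t Ht. left. apply Rabs_lt_between in Hv. apply Hd; try lra.
    rewrite Rminus_eq_0, Rabs_R0. apply cond_pos.
Qed.

Lemma I_eq_Ival m b : 1 < m -> 0 <= b <= bmax -> I_eq m b (Ival m b).
Proof.
  intros hm Hb.
  set (F := fun t => RInt (fun s => integrand_ext m s b) (-1) t).
  assert (HF : forall t, -1 <= t <= 1 -> is_RInt (integrand m b) (-1) t (F t)).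
  { intros t Ht. apply (is_RInt_ext (V := R_CompleteNormedModule)
      (fun s => integrand_ext m s b)).
    - intros s Hs. rewrite Rmin_left, Rmax_right in Hs by lra.
      apply integrand_ext_eq; lra.
    - apply RInt_correct, ex_RInt_integrand_ext, hm. }
  split.
  - intros t Ht.
    exists (ex_RInt_Reals_0 (integrand m b) (-1) t (ex_intro _ _ (HF t ltac:(lra)))).
    exact I.
  - intros eps He.
    assert (HFc : continuity_pt F 1).
    { apply continuity_pt_filterlim.
      apply (continuous_RInt_1 (V := R_CompleteNormedModule)
        (fun s => integrand_ext m s b) (-1)).
      apply filter_forall. intros z. apply RInt_correct, ex_RInt_integrand_ext, hm. }
    destruct (HFc eps He) as (d & Hd & Hc).
    exists d. split; [exact Hd|]. intros t pr Ht Htd.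
    rewrite <- RInt_Reals, (is_RInt_unique _ _ _ _ (HF t ltac:(lra))).
    apply (Hc t). split; [split; [exact I | lra]|]. simpl. unfold R_dist.
    rewrite Rabs_left; lra.
Qed.

Lemma integrand_at_0 m s : integrand m 0 s = Rpower (1/2) (m - 2) * (s * (2 + s)).
Proof.
  assert (Hc : cb 0 = 1) by (unfold cb; replace (1 + 0 ^ 2) with 1 by ring; apply sqrt_1).
  assert (Hd : db 0 = - (1/2)) by (unfold db; rewrite Hc; field).
  unfold integrand. rewrite Hd, Hc.
  replace (0 * s + 1) with 1 by ring.
  replace (- (1/2) * 0 * s + - (1/2) * 1 + 1) with (1/2) by field.
  unfold Rpower at 1. rewrite ln_1, Rmult_0_r, exp_0. field.
Qed.

Lemma Ival_0 m : Ival m 0 = Rpower (1/2) (m - 2) * (2/3).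
Proof.
  pose proof bmax_bounds. unfold Ival.
  set (K := Rpower (1/2) (m - 2)).
  rewrite (RInt_ext (V := R_CompleteNormedModule) _ (fun s => K * (s * (2 + s)))).
  2:{ intros s Hs. rewrite Rmin_left, Rmax_right in Hs by lra.
      rewrite integrand_ext_eq by lra. apply integrand_at_0. }
  apply is_RInt_unique.
  replace (K * (2/3)) with (minus (K * (1 ^ 2 + 1 ^ 3 / 3)) (K * ((-1) ^ 2 + (-1) ^ 3 / 3)))
    by (unfold minus, plus, opp; simpl; field).
  apply (is_RInt_derive (V := R_CompleteNormedModule) (fun s => K * (s ^ 2 + s ^ 3 / 3))).
  - intros s _. auto_derive; [exact I | field].
  - intros s _. apply (ex_derive_continuous (V := R_NormedModule)). auto_derive. exact I.
Qed.

Lemma integrand_bmax_neg m s : -1 <= s < 1 -> integrand m bmax s < 0.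
Proof.
  intros Hs. pose proof bmax_sqr. pose proof bmax_bounds.
  unfold integrand. rewrite cb_bmax.
  assert (HN : 2 + s - 2 * (bmax * s + 5 * bmax) ^ 2 < 0).
  { replace (2 * (bmax * s + 5 * bmax) ^ 2) with (2 * bmax ^ 2 * (s + 5) ^ 2) by ring.
    nra. }
  pose proof (Rpower_pos (bmax * s + 5 * bmax) (m + 4)) as HU.
  pose proof (Rpower_pos (db bmax * bmax * s + db bmax * (5 * bmax) + 1) (m - 2)).
  assert (0 < / Rpower (bmax * s + 5 * bmax) (m + 4)) by (apply Rinv_0_lt_compat; exact HU).
  unfold Rdiv. apply Rmult_neg_pos; [|lra]. apply Rmult_neg_pos; [|lra].
  apply Rmult_neg_pos; lra.
Qed.

Lemma Ival_bmax_neg m : 1 < m -> Ival m bmax < 0.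
Proof.
  intros hm. pose proof bmax_bounds. unfold Ival.
  apply Rlt_le_trans with (RInt (fun _ => 0) (-1) 1).
  - apply RInt_lt; [lra | intros; apply continuous_const | |].
    + intros s _. apply continuity_pt_filterlim, continuity_2d_pt_fst.
      apply continuity_integrand_ext, hm.
    + intros s Hs. rewrite integrand_ext_eq by lra. apply integrand_bmax_neg. lra.
  - rewrite RInt_const. unfold scal; simpl; unfold mult; simpl. lra.
Qed.

Theorem mainTheorem3 (m : R) (hm : 1 < m) :
  I_eq m 0 (Rpower (1/2) (m - 2) * (2/3)) /\
  0 < Rpower (1/2) (m - 2) * (2/3) /\
  (exists L, I_eq m (/ sqrt 24) L /\ L < 0) /\
  (exists b, 0 < b < / sqrt 24 /\ I_eq m b 0).
Proof.
  fold bmax. pose proof bmax_bounds.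
  pose proof (Ival_0 m) as HI0. pose proof (Ival_bmax_neg m hm) as HI1.
  pose proof (Rpower_pos (1/2) (m - 2)).
  split; [|split; [lra | split]].
  - rewrite <- HI0. apply I_eq_Ival; lra.
  - exists (Ival m bmax). split; [apply I_eq_Ival; lra | exact HI1].
  - destruct (IVT_cor (Ival m) 0 bmax (fun b => continuity_Ival m b hm))
      as (b & Hb & Hzero); [lra | nra |].
    exists b. rewrite <- Hzero.
    assert (b <> 0) by (intros ->; lra).
    assert (b <> bmax) by (intros ->; lra).
    split; [lra | apply I_eq_Ival; lra].
Qed.
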